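(* Let $W\colon\mathbb{R}^n\to\mathcal{M}_d$ be a matrix weight and let $F\colon\mathbb{R}^n\to\mathcal{K}_{bcs}(\mathbb{R}^d)$ be measurable such that $W^{-1}F$ is locally integrably bounded. Then, for every $x$, $$|W(x)M_\mathcal{K}^s(W^{-1}F)(x)|\sim_d\sup_{f\in S^0(F)}M_W^sf(x),$$ i.e. each side is bounded by a constant depending only on $d$ times the other. In particular, if $F(x)=\operatorname{conv}(\{-f(x),f(x)\})$ for some $f\colon\mathbb{R}^n\to\mathbb{R}^d$, then $|W(x)M_\mathcal{K}^s(W^{-1}F)(x)|\sim_d M_W^sf(x)$. These estimates also hold with the one-parameter operators $M_\mathcal{K}$ and $M_W$ in place of $M_\mathcal{K}^s$ and $M_W^s$, respectively.
   Context: $\mathbb{R}^n=\mathbb{R}^{n_1}\times\mathbb{R}^{n_2}$; $\mathcal{R}$ is the set of rectangles $Q_1\times Q_2$ with $Q_i\subset\mathbb{R}^{n_i}$ axis-parallel cubes. A matrix weight is a measurable $W\colon\mathbb{R}^n\to\mathcal{M}_d$ (real $d\times d$ matrices) with $W(x)$ symmetric positive definite a.e. $\mathcal{K}_{bcs}(\mathbb{R}^d)$: compact convex symmetric subsets of $\mathbb{R}^d$; $|A|:=\sup_{a\in A}|a|$ for $A\subset\mathbb{R}^d$, and $|W(x)A|=\sup_{b\in A}|W(x)b|$. A set-valued $F$ is measurable iff $F(x)=\overline{\{f_k(x):k\in\mathbb{N}\}}$ for some measurable vector functions $f_k$; it is locally integrably bounded if $|F(x)|\le k(x)$ for all $x$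 with $k\in L^1_{loc}$. $S^0(F)$ is the set of measurable $f$ with $f(x)\in F(x)$ for all $x$. $M_\mathcal{K}^sG(x):=\overline{\operatorname{conv}}\big(\{(\fint_Rg)1_R(x):R\in\mathcal{R},g\in S^0(G)\}\big)$ and $M_W^sf(x):=\sup_{R\in\mathcal{R},R\ni x}\fint_R|W(x)W(y)^{-1}f(y)|dy$. The one-parameter versions $M_\mathcal{K}$ and $M_W$ are defined identically with $R\in\mathcal{R}$ replaced by arbitrary axis-parallel cubes $Q\subset\mathbb{R}^n$. *)

From HB Require Import structures.
From mathcomp Require Import all_boot all_order all_algebra.
From mathcomp Require Import all_classical all_reals all_analysis.
Set Implicit Arguments. Unset Strict Implicit. Unset Printing Implicit Defensive.
Import Order.TTheory GRing.Theory Num.Theory.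
Import numFieldNormedType.Exports.
Local Open Scope classical_set_scope.
Local Open Scope ring_scope.

Section Defs.
Variable R : realType.

Definition eucl (d : nat) (v : 'cV[R]_d) : R := Num.sqrt (\sum_(i < d) v i 0 ^+ 2).

Definition box (n : nat) (a b : 'rV[R]_n) : set 'rV[R]_n :=
  [set x | forall i, a 0 i <= x 0 i <= b 0 i].
Definition box_vol (n : nat) (a b : 'rV[R]_n) : R := \prod_(i < n) (b 0 i - a 0 i).

Definition leb_outer (n : nat) (A : set 'rV[R]_n) : \bar R :=
  ereal_inf [set s | exists a b : nat -> 'rV[R]_n,
     (forall k i, a k 0 i <= b k 0 i) /\
     A `<=` \bigcup_k box (a k) (b k) /\
     s = (\sum_(0 <= k <oo) (box_vol (a k) (b k))%:E)%E].

Definition leb_sets (n : nat) : set (set 'rV[R]_n) := caratheodory_measurable (@leb_outer n).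

(** R^n equipped with the Lebesgue sigma-algebra (generated by [leb_sets n],
    which is already a sigma-algebra). *)
End Defs.

Notation LebT R n := (g_sigma_algebraType (@leb_sets R n)).

Section Defs2.
Variable R : realType.
Local Notation LebT n := (LebT R n).

Definition pt (n : nat) (x : LebT n) : 'rV[R]_n := x.

Definition is_lebesgue (n : nat) (mu : set (LebT n) -> \bar R) : Prop :=
  forall A : set (LebT n), measurable A -> mu A = leb_outer A.

Definition cube (k : nat) (a : 'rV[R]_k) (l : R) : set 'rV[R]_k :=
  [set y | forall i, a 0 i <= y 0 i <= a 0 i + l].

Definition cubes (n : nat) : set (set (LebT n)) :=
  [set Q | exists (a : 'rV[R]_n) (l : R), 0 < l /\ Q = (fun x => cube a l (pt x))].

Definition rects (n1 n2 : nat) : set (set (LebT (n1 + n2))) :=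
  [set Q | exists (a1 : 'rV[R]_n1) (l1 : R) (a2 : 'rV[R]_n2) (l2 : R),
     0 < l1 /\ 0 < l2 /\
     Q = (fun x => cube a1 l1 (lsubmx (pt x)) /\ cube a2 l2 (rsubmx (pt x)))].

Variables (n d : nat).

Definition vmeas (f : LebT n -> 'cV[R]_d) : Prop :=
  forall i, measurable_fun setT (fun x => f x i 0).

Definition convhull (S : set 'cV[R]_d) : set 'cV[R]_d :=
  [set b | exists (k : nat) (c : 'I_k -> R) (v : 'I_k -> 'cV[R]_d),
     (forall j, 0 <= c j) /\ \sum_(j < k) c j = 1 /\ (forall j, S (v j)) /\
     b = \sum_(j < k) c j *: v j].

Definition convex_set (K : set 'cV[R]_d) : Prop :=
  forall a b t, K a -> K b -> 0 <= t <= 1 -> K (t *: a + (1 - t) *: b).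

Definition symmetric_set (K : set 'cV[R]_d) : Prop := forall a, K a -> K (- a).

Definition Kbcs (K : set 'cV[R]_d) : Prop :=
  compact K /\ convex_set K /\ symmetric_set K.

(** |A| := sup_{a in A} |a| and |M A| := sup_{b in A} |M b| (values in [0, +oo] or -oo for empty A). *)
Definition set_norm (M : 'M[R]_d) (A : set 'cV[R]_d) : \bar R :=
  ereal_sup [set (eucl (M *m b))%:E | b in A].

Definition setfun_meas (F : LebT n -> set 'cV[R]_d) : Prop :=
  exists fk : nat -> LebT n -> 'cV[R]_d,
    (forall k, vmeas (fk k)) /\
    forall x, F x = closure (range (fun k => fk k x)).

Variable mu : {measure set (LebT n) -> \bar R}.

Definition L1loc (k : LebT n -> R) : Prop :=
  measurable_fun setT k /\
  forall (a : 'rV[R]_n) (l : R), 0 < l ->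
    mu.-integrable (fun x => cube a l (pt x)) (fun x => (k x)%:E).

Definition loc_int_bounded (F : LebT n -> set 'cV[R]_d) : Prop :=
  exists k : LebT n -> R, L1loc k /\
    forall x, (set_norm 1%:M (F x) <= (k x)%:E)%E.

Definition S0 (F : LebT n -> set 'cV[R]_d) : set (LebT n -> 'cV[R]_d) :=
  [set f | vmeas f /\ forall x, F x (f x)].

Definition posdef (M : 'M[R]_d) : Prop :=
  M^T = M /\ forall v : 'cV[R]_d, v != 0 -> 0 < (v^T *m M *m v) 0 0.

Definition matrix_weight (W : LebT n -> 'M[R]_d) : Prop :=
  (forall i j, measurable_fun setT (fun x => W x i j)) /\
  exists N : set (LebT n), measurable N /\ mu N = 0%E /\
    forall x, ~ N x -> posdef (W x).

Definition winv_set (W : LebT n -> 'M[R]_d) (F : LebT n -> set 'cV[R]_d) :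
  LebT n -> set 'cV[R]_d := fun x => [set invmx (W x) *m b | b in F x].

Definition avg (A : set (LebT n)) (g : LebT n -> 'cV[R]_d) : 'cV[R]_d :=
  (fine (mu A))^-1 *: \col_(i < d) Rintegral mu A (fun y => g y i 0).

(** M_K over the family B of sets (B = rects: M_K^s ; B = cubes: M_K). *)
Definition MK (B : set (set (LebT n))) (G : LebT n -> set 'cV[R]_d) (x : LebT n)
  : set 'cV[R]_d :=
  closure (convhull [set (\1_A x) *: avg A g | A in B & g in S0 G]).

(** M_W over the family B (B = rects: M_W^s ; B = cubes: M_W). *)
Definition MW (B : set (set (LebT n))) (W : LebT n -> 'M[R]_d)
  (f : LebT n -> 'cV[R]_d) (x : LebT n) : \bar R :=
  ereal_sup [set ((fine (mu A))^-1)%:E *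
                 \int[mu]_(y in A) (eucl (W x *m invmx (W y) *m f y))%:E
            | A in [set A | B A /\ A x]]%E.

Definition supMW (B : set (set (LebT n))) (W : LebT n -> 'M[R]_d)
  (F : LebT n -> set 'cV[R]_d) (x : LebT n) : \bar R :=
  ereal_sup [set MW B W f x | f in S0 F].

End Defs2.

From HB Require Import structures.
From mathcomp Require Import all_boot all_order all_algebra.
From mathcomp Require Import all_classical all_reals all_analysis.
From mathcomp Require Import measurable_realfun.
From mathcomp Require Import ring lra.
Set Implicit Arguments. Unset Strict Implicit. Unset Printing Implicit Defensive.
Import Order.TTheory GRing.Theory Num.Theory.
Import numFieldNormedType.Exports.
Local Open Scope classical_set_scope.
Local Open Scope ring_scope.

(* Everything is read off the coordinates of W(x) b.  Upper bound: M_K(W^-1 F)(x) is the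
   closed convex hull of the vectors 1_A(x) <g>_A, g a selection of W^-1 F, and the norm
   b |-> |W(x) b|_1 is convex and continuous, so it is enough to bound
   |W(x) <g>_A|_1 <= d <|W(x) g|>_A.  Off the null set where W is singular, f := W g is a
   selection of F with W(x) g(y) = W(x) W(y)^-1 f(y), so this is at most d M_W f(x).
   Lower bound: for each coordinate i, |(W(x) W(y)^-1 f(y))_i| is the nondecreasing limit of
   (W(x) W(y)^-1 s_m(y))_i for measurable selections s_m of F: sign flips of f, or, when
   F = conv{-f, f} with f possibly non-measurable, running maximisers over a dense sequence
   of selections.  By monotone convergence the average of that coordinate over A is a limit
   of coordinates of W(x) <W^-1 s_m>_A, each at most |W(x) M_K(W^-1 F)(x)|, and the d
   coordinates add up to the factor d.  Rectangles and cubes enter only as measurable sets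
   on which the bound of W^-1 F is integrable. *)

Definition l1norm (R : realType) (d : nat) (v : 'cV[R]_d) : R := \sum_i `|v i 0|.

Definition mx_abs_sum (R : realType) (p q : nat) (M : 'M[R]_(p, q)) : R :=
  \sum_i \sum_j `|M i j|.

Section VectorNorms.
Variable R : realType.

Lemma eucl_ge0 d (v : 'cV[R]_d) : 0 <= eucl v.
Proof. exact: sqrtr_ge0. Qed.

Lemma normr_coord_le_eucl d (v : 'cV[R]_d) i : `|v i 0| <= eucl v.
Proof.
rewrite /eucl -sqrtr_sqr ler_wsqrtr // (bigD1 i) //= lerDl.
by apply: sumr_ge0 => j _; exact: sqr_ge0.
Qed.

Lemma euclZ d (t : R) (v : 'cV[R]_d) : eucl (t *: v) = `|t| * eucl v.
Proof.
rewrite /eucl -sqrtr_sqr -sqrtrM ?sqr_ge0 // mulr_sumr; congr Num.sqrt.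
by apply: eq_bigr => i _; rewrite mxE exprMn.
Qed.

Lemma l1norm_ge0 d (v : 'cV[R]_d) : 0 <= l1norm v.
Proof. exact: sumr_ge0. Qed.

Lemma normr_coord_le_l1norm d (v : 'cV[R]_d) i : `|v i 0| <= l1norm v.
Proof. by rewrite /l1norm (bigD1 i) //= lerDl sumr_ge0. Qed.

Lemma eucl_le_l1norm d (v : 'cV[R]_d) : eucl v <= l1norm v.
Proof.
have sq_le : \sum_i v i 0 ^+ 2 <= l1norm v ^+ 2.
  rewrite expr2 {1}/l1norm mulr_suml; apply: ler_sum => i _.
  by rewrite -real_normK ?num_real // expr2 ler_wpM2l // normr_coord_le_l1norm.
by rewrite /eucl -(ger0_norm (l1norm_ge0 v)) -sqrtr_sqr ler_wsqrtr.
Qed.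

Lemma l1normD d (v w : 'cV[R]_d) : l1norm (v + w) <= l1norm v + l1norm w.
Proof.
by rewrite /l1norm -big_split; apply: ler_sum => i _; rewrite mxE ler_normD.
Qed.

Lemma l1norm_convex d m (c : 'I_m -> R) (v : 'I_m -> 'cV[R]_d) :
  (forall j, 0 <= c j) -> l1norm (\sum_j c j *: v j) <= \sum_j c j * l1norm (v j).
Proof.
move=> c0; rewrite /l1norm.
under eq_bigr do rewrite summxE.
apply: (@le_trans _ _ (\sum_i \sum_j c j * `|v j i 0|)).
  apply: ler_sum => i _; apply: (le_trans (ler_norm_sum _ _ _)).
  by apply: ler_sum => j _; rewrite mxE normrM ger0_norm.
by rewrite exchange_big; apply: ler_sum => j _; rewrite mulr_sumr.
Qed.

Lemma normr_coord_le_mx_norm d (w : 'cV[R]_d) i : `|w i 0| <= `|w|.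
Proof.
rewrite [X in _ <= X]mx_normrE.
exact: (le_bigmax _ (fun ij : 'I_d * 'I_1 => `|w ij.1 ij.2|) (i, 0)).
Qed.

Lemma coord_mulmx_le p q (M : 'M[R]_(p, q)) (v : 'cV[R]_q) i (m : R) :
  (forall j, `|v j 0| <= m) -> `|(M *m v) i 0| <= (\sum_j `|M i j|) * m.
Proof.
move=> hv; rewrite mxE mulr_suml (le_trans (ler_norm_sum _ _ _)) //.
by apply: ler_sum => j _; rewrite normrM ler_wpM2l.
Qed.

Lemma l1norm_mulmx_le p q (M : 'M[R]_(p, q)) (v : 'cV[R]_q) (m : R) :
  (forall j, `|v j 0| <= m) -> l1norm (M *m v) <= mx_abs_sum M * m.
Proof.
by move=> hv; rewrite /mx_abs_sum mulr_suml; apply: ler_sum => i _; exact: coord_mulmx_le.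
Qed.

Lemma mx_abs_sum_ge0 p q (M : 'M[R]_(p, q)) : 0 <= mx_abs_sum M.
Proof. by apply: sumr_ge0 => i _; exact: sumr_ge0. Qed.

Lemma l1norm_mulmx_le_eucl p q (M : 'M[R]_(p, q)) (v : 'cV[R]_q) :
  l1norm (M *m v) <= mx_abs_sum M * eucl v.
Proof. exact/l1norm_mulmx_le/normr_coord_le_eucl. Qed.

End VectorNorms.

Section ClosedConvexHull.
Variables (R : realType) (d : nat) (M : 'M[R]_d) (S : set 'cV[R]_d) (r : R).
Hypothesis l1norm_S : forall b, S b -> l1norm (M *m b) <= r.

Lemma l1norm_mulmx_convhull_le b : convhull S b -> l1norm (M *m b) <= r.
Proof.
move=> [m [c [v [c0 [c1 [Sv ->]]]]]].
rewrite mulmx_sumr; under eq_bigr do rewrite -scalemxAr.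
apply: (le_trans (l1norm_convex _ c0)).
apply: (@le_trans _ _ (\sum_j c j * r)); last by rewrite -mulr_suml c1 mul1r.
by apply: ler_sum => j _; rewrite ler_wpM2l // l1norm_S.
Qed.

Lemma l1norm_mulmx_closure_le b : closure S b -> l1norm (M *m b) <= r.
Proof.
move=> Sb; apply/ler_addgt0Pr => e e0.
have K1 : 0 < mx_abs_sum M + 1 by rewrite ltr_wpDl // mx_abs_sum_ge0.
have e'0 : 0 < e / (mx_abs_sum M + 1) by rewrite divr_gt0.
have [b' [Sb' bb']] := Sb _ (nbhsx_ballx b _ e'0).
move: bb'; rewrite -ball_normE /ball_ /= => bb'.
rewrite -(subrK b' b) mulmxDr (le_trans (l1normD _ _)) // addrC lerD ?l1norm_S //.
apply: (le_trans (l1norm_mulmx_le _ (fun j => normr_coord_le_mx_norm _ j))).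
apply: (@le_trans _ _ ((mx_abs_sum M + 1) * (e / (mx_abs_sum M + 1)))).
  by rewrite ler_pM ?mx_abs_sum_ge0 ?normr_ge0 ?lerDl // ltW.
by rewrite mulrC divfK ?gt_eqF.
Qed.

End ClosedConvexHull.

Lemma convhull_opp_pair (R : realType) d (v w : 'cV[R]_d) :
  convhull [set - v; v] w -> exists t : R, `|t| <= 1 /\ w = t *: v.
Proof.
move=> [m [c [u [c0 [c1 [hu ->]]]]]].
have [e he] : exists e : 'I_m -> R, forall j, `|e j| = 1 /\ u j = e j *: v.
  exists (fun j => if u j == v then 1 else -1) => j; case: eqP => [->|h].
    by rewrite normr1 scale1r.
  by case: (hu j) => // ->; rewrite normrN1 scaleN1r.
exists (\sum_j c j * e j); split.
  rewrite (le_trans (ler_norm_sum _ _ _)) // -c1; apply: ler_sum => j _.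
  by rewrite normrM (proj1 (he j)) mulr1 ger0_norm.
by rewrite scaler_suml; apply: eq_bigr => j _; rewrite (proj2 (he j)) scalerA.
Qed.

Lemma posdef_unitmx (R : realType) d (M : 'M[R]_d) : posdef M -> M \in unitmx.
Proof.
move=> [_ hp]; rewrite unitmxE unitfE; apply/negP => /det0P [v v0 vM].
have vT0 : v^T != 0 by apply: contra v0 => /eqP h; rewrite -(trmxK v) h trmx0.
by have := hp _ vT0; rewrite trmxK vM mul0mx mxE ltxx.
Qed.

Lemma Kbcs_zero (R : realType) d (K : set 'cV[R]_d) : Kbcs K -> K !=set0 -> K 0.
Proof.
move=> [_ [convK symK]] [a Ka].
have half01 : (0 <= 2^-1 :> R) && (2^-1 <= 1 :> R).
  by rewrite invr_ge0 ler0n /= invf_le1 ?ler1n ?ltr0n.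
have := convK _ _ _ Ka (symK _ Ka) half01.
by rewrite [X in X - _](splitr 1) mul1r addrK scalerN addrN.
Qed.

Section MeasurableMatrixFunctions.
Context d (T : measurableType d) (R : realType).

Definition measurable_mxfun p q (M : T -> 'M[R]_(p, q)) :=
  forall i j, measurable_fun setT (fun y => M y i j).

Lemma measurable_mxfun_cst p q (A : 'M[R]_(p, q)) : measurable_mxfun (fun _ => A).
Proof. by move=> i j; exact: measurable_cst. Qed.

Lemma measurable_mxfunM p q r (M : T -> 'M[R]_(p, q)) (N : T -> 'M[R]_(q, r)) :
  measurable_mxfun M -> measurable_mxfun N -> measurable_mxfun (fun y => M y *m N y).
Proof.
move=> mM mN i j; under eq_fun do rewrite mxE.
by apply: measurable_sum => k; exact: measurable_funM.
Qed.

Lemma measurable_fun_det n (M : T -> 'M[R]_n) : measurable_mxfun M ->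
  measurable_fun setT (fun y => \det (M y)).
Proof.
move=> mM; apply: measurable_sum => s; apply: measurable_funM; first exact: measurable_cst.
by apply: measurable_prod => i _; exact: mM.
Qed.

Lemma measurable_fun_inv : measurable_fun (setT : set R) (@GRing.inv R).
Proof.
have -> : (setT : set R) = [set 0] `|` [set x | x != 0].
  by apply/seteqP; split => x //= _; case: (eqVneq x 0) => h; [left|right].
apply/measurable_funU => //; first by apply: open_measurable; exact: open_neq.
split; first exact: measurable_fun_set1.
apply: open_continuous_measurable_fun; first exact: open_neq.
by move=> x; rewrite inE /= => x0; exact: inv_continuous.
Qed.

Lemma measurable_mxfun_invmx n (M : T -> 'M[R]_n) : measurable_mxfun M ->
  measurable_mxfun (fun y => invmx (M y)).
Proof.
move=> mM i j; rewrite /invmx.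
under eq_fun do rewrite unitmxE unitfE (fun_if (fun A : 'M[R]_n => A i j)) mxE.
apply: measurable_fun_ifT; last exact: mM.
  by apply: measurable_neg; apply: measurable_fun_eqr => //; exact: measurable_fun_det.
apply: measurable_funM.
  exact: measurableT_comp measurable_fun_inv (measurable_fun_det mM).
under eq_fun do rewrite mxE; apply: measurable_funM; first exact: measurable_cst.
apply: measurable_fun_det => a b; under eq_fun do rewrite !mxE.
exact: mM.
Qed.

Lemma measurable_fun_eucl p (v : T -> 'cV[R]_p) : measurable_mxfun v ->
  measurable_fun setT (fun y => eucl (v y)).
Proof.
move=> mv; apply: measurableT_comp; first exact: continuous_measurable_fun (@sqrt_continuous R).
by apply: measurable_sum => i; apply: measurable_funX; exact: mv.
Qed.

End MeasurableMatrixFunctions.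

Lemma vmeasP (R : realType) n d (f : LebT R n -> 'cV[R]_d) :
  vmeas f <-> measurable_mxfun f.
Proof. by split => [mf i j|mf i]; [rewrite (ord1 j); exact: mf | exact: mf]. Qed.

Section LebesgueOuterMeasure.
Variables (R : realType) (n : nat).
Local Notation leb := (@leb_outer R n).

Lemma box_vol_ge0 (a b : 'rV[R]_n) : (forall i, a 0 i <= b 0 i) -> 0 <= box_vol a b.
Proof. by move=> ab; apply: prodr_ge0 => i _; rewrite subr_ge0. Qed.

Lemma leb_outer_ge0 X : (0 <= leb X)%E.
Proof.
apply/ereal_infP => _ [a [b [ab [_ ->]]]].
by apply: nneseries_ge0 => k _ _; rewrite lee_fin box_vol_ge0.
Qed.

Lemma leb_outer_le_cover X (a b : nat -> 'rV[R]_n) : (forall k i, a k 0 i <= b k 0 i) ->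
  X `<=` \bigcup_k box (a k) (b k) ->
  (leb X <= \sum_(0 <= k <oo) (box_vol (a k) (b k))%:E)%E.
Proof. by move=> ab cov; apply: ereal_inf_lbound; exists a, b. Qed.

(* Interleaving two box covers of [P] and [Q] gives a cover of [P `|` Q]. *)
Lemma leb_outer_le_cover2 X P Q (a b a' b' : nat -> 'rV[R]_n) :
  (forall k i, a k 0 i <= b k 0 i) -> (forall k i, a' k 0 i <= b' k 0 i) ->
  P `<=` \bigcup_k box (a k) (b k) -> Q `<=` \bigcup_k box (a' k) (b' k) ->
  X `<=` P `|` Q ->
  (leb X <= \sum_(0 <= k <oo) (box_vol (a k) (b k))%:E +
            \sum_(0 <= k <oo) (box_vol (a' k) (b' k))%:E)%E.
Proof.
move=> ab ab' covP covQ XPQ.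
pose A k := if odd k then a' k./2 else a k./2.
pose B k := if odd k then b' k./2 else b k./2.
have AB k i : A k 0 i <= B k 0 i by rewrite /A /B; case: ifP.
apply: (le_trans (leb_outer_le_cover AB _)).
  move=> y /XPQ [/covP [k _ hk]|/covQ [k _ hk]].
    by exists k.*2 => //; rewrite /A /B odd_double doubleK.
  by exists k.*2.+1 => //; rewrite /A /B /= odd_double /= uphalf_double.
have sum_double N : \sum_(0 <= k < N.*2) (box_vol (A k) (B k))%:E =
    \sum_(0 <= j < N) ((box_vol (a j) (b j))%:E + (box_vol (a' j) (b' j))%:E).
  elim: N => [|N IH]; first by rewrite !big_geq.
  rewrite doubleS !big_nat_recr //= IH -addeA; congr (_ + _).
  by rewrite /A /B /= odd_double /= doubleK uphalf_double.
rewrite -nneseriesD; try by move=> k _ _; rewrite lee_fin box_vol_ge0.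
apply: lime_le; first by apply: is_cvg_nneseries => k _ _; rewrite lee_fin box_vol_ge0.
have u0 k : (0 <= (box_vol (A k) (B k))%:E)%E by rewrite lee_fin box_vol_ge0.
apply: nearW => N.
apply: (@le_trans _ _ (\sum_(0 <= k < N.*2) (box_vol (A k) (B k))%:E)%E).
  rewrite (big_cat_nat (leq0n N) (_ : N <= N.*2)%N) -?addnn ?leq_addr //=.
  by rewrite leeDl // sume_ge0.
rewrite sum_double; apply: nneseries_lim_ge => k _.
by rewrite adde_ge0 // lee_fin box_vol_ge0.
Qed.

Lemma leb_outerU_le X P Q : X `<=` P `|` Q -> (leb X <= leb P + leb Q)%E.
Proof.
move=> XPQ.
have [finP|] := boolP (leb P \is a fin_num); last first.
  rewrite ge0_fin_numE ?leb_outer_ge0 // -leNgt leye_eq => /eqP ->.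
  by rewrite addye ?leey //; move: (leb_outer_ge0 Q); case: (leb Q).
have [finQ|] := boolP (leb Q \is a fin_num); last first.
  rewrite ge0_fin_numE ?leb_outer_ge0 // -leNgt leye_eq => /eqP ->.
  by rewrite addey ?leey //; move: (leb_outer_ge0 P); case: (leb P).
apply/lee_addgt0Pr => e e0.
have e20 : 0 < e / 2 by rewrite divr_gt0.
have [_ [a [b [ab [covP ->]]]] coverP] := lb_ereal_inf_adherent e20 finP.
have [_ [a' [b' [ab' [covQ ->]]]] coverQ] := lb_ereal_inf_adherent e20 finQ.
apply: (le_trans (leb_outer_le_cover2 ab ab' covP covQ XPQ)).
apply: (le_trans (leeD (ltW coverP) (ltW coverQ))).
rewrite -/(leb P) -/(leb Q) -(fineK finP) -(fineK finQ) -!EFinD lee_fin; lra.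
Qed.

Definition set_coord (a : 'rV[R]_n) (i : 'I_n) (c : R) : 'rV[R]_n :=
  \row_j (if j == i then c else a 0 j).

Lemma box_vol_split (a b : 'rV[R]_n) i c :
  box_vol a (set_coord b i c) + box_vol (set_coord a i c) b = box_vol a b.
Proof.
rewrite /box_vol (bigD1 i (F := fun j => set_coord b i c 0 j - a 0 j)) //.
rewrite (bigD1 i (F := fun j => b 0 j - set_coord a i c 0 j)) //.
rewrite (bigD1 i (F := fun j => b 0 j - a 0 j)) //= !mxE eqxx.
have same_rest (u v : 'rV[R]_n) : \prod_(j | j != i) (set_coord u i c 0 j - v 0 j) =
    \prod_(j | j != i) (u 0 j - v 0 j).
  by apply: eq_bigr => j /negbTE ji; rewrite mxE ji.
have same_rest' (u v : 'rV[R]_n) : \prod_(j | j != i) (u 0 j - set_coord v i c 0 j) =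
    \prod_(j | j != i) (u 0 j - v 0 j).
  by apply: eq_bigr => j /negbTE ji; rewrite mxE ji.
by rewrite same_rest same_rest'; ring.
Qed.

Lemma caratheodory_measurable_halfspace (i : 'I_n) (c : R) (H : set 'rV[R]_n) :
  [set y : 'rV[R]_n | y 0 i < c] `<=` H -> H `<=` [set y : 'rV[R]_n | y 0 i <= c] ->
  caratheodory_measurable leb H.
Proof.
move=> ltH Hle X; apply/eqP; rewrite eq_le; apply/andP; split.
  by apply: leb_outerU_le => y Xy; case: (pselect (H y)); [left|right].
apply/ereal_infP => _ [a [b [ab [cov ->]]]].
(* Cut every covering box by the hyperplane [y 0 i = c], clamped to the box. *)
pose mid k := Num.max (a k 0 i) (Num.min c (b k 0 i)).
have ab_lo k j : a k 0 j <= set_coord (b k) i (mid k) 0 j.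
  by rewrite mxE; case: eqP => [->|_]; rewrite ?le_max ?lexx.
have ab_hi k j : set_coord (a k) i (mid k) 0 j <= b k 0 j.
  by rewrite mxE; case: eqP => [->|_]; rewrite ?ge_max ?ab ?ge_min ?lexx ?orbT.
apply: (@le_trans _ _ (\sum_(0 <= k <oo) (box_vol (a k) (set_coord (b k) i (mid k)))%:E +
    \sum_(0 <= k <oo) (box_vol (set_coord (a k) i (mid k)) (b k))%:E)%E); last first.
  rewrite -nneseriesD; try by move=> k _ _; rewrite lee_fin box_vol_ge0.
  apply: lee_nneseries => [k _ _|k _]; last by rewrite -EFinD box_vol_split.
  by rewrite adde_ge0 // lee_fin box_vol_ge0.
apply: leeD; apply: leb_outer_le_cover => // y [/cov [k _ yk] Hy]; exists k => // j;
  rewrite mxE; case: eqP => [->|_] //; have /andP[ay yb] := yk i.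
  by rewrite ay le_max le_min (Hle _ Hy) yb orbT.
have cy : c <= y 0 i by rewrite leNgt; apply/negP => /ltH.
by rewrite yb andbT ge_max ay ge_min cy.
Qed.

End LebesgueOuterMeasure.

Section LebesgueMeasurableSets.
Variables (R : realType) (n : nat).
Local Notation T := (LebT R n).

Lemma measurable_coord_le (i : 'I_n) (c : R) : measurable [set y : T | pt y 0 i <= c].
Proof.
apply: sub_gen_smallest; apply: (caratheodory_measurable_halfspace (i := i) (c := c)) => y yc //.
exact: ltW.
Qed.

Lemma measurable_coord_ge (i : 'I_n) (c : R) : measurable [set y : T | c <= pt y 0 i].
Proof.
have -> : [set y : T | c <= pt y 0 i] = ~` [set y : T | pt y 0 i < c].
  by apply/seteqP; split => y /=; rewrite leNgt => /negP.
apply: measurableC; apply: sub_gen_smallest.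
apply: (caratheodory_measurable_halfspace (i := i) (c := c)) => y yc //.
exact: ltW.
Qed.

Lemma measurable_coord_box m (s : 'I_m -> 'I_n) (lo hi : 'I_m -> R) :
  measurable [set y : T | forall j, lo j <= pt y 0 (s j) <= hi j].
Proof.
have -> : [set y : T | forall j, lo j <= pt y 0 (s j) <= hi j] =
    \bigcap_(j in [set: 'I_m])
      ([set y : T | lo j <= pt y 0 (s j)] `&` [set y : T | pt y 0 (s j) <= hi j]).
  apply/seteqP; split => [y yP j _|y yP j]; first exact/andP/yP.
  by have [-> ->] := yP j I.
apply: fin_bigcap_measurable; first exact: finite_finset.
by move=> j _; apply: measurableI; [exact: measurable_coord_ge | exact: measurable_coord_le].
Qed.

Lemma cubes_measurable (A : set T) : cubes A -> measurable A.
Proof. by move=> [a [l [_ ->]]]; exact: (measurable_coord_box id). Qed.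

End LebesgueMeasurableSets.

Section Rectangles.
Variables (R : realType) (n1 n2 : nat).
Local Notation T := (LebT R (n1 + n2)).

Lemma rects_measurable (A : set T) : rects A -> measurable A.
Proof.
move=> [a1 [l1 [a2 [l2 [_ [_ ->]]]]]].
have -> : (fun x : T => cube a1 l1 (lsubmx (pt x)) /\ cube a2 l2 (rsubmx (pt x))) =
  [set y : T | forall j, a1 0 j <= pt y 0 (lshift n2 j) <= a1 0 j + l1] `&`
  [set y : T | forall j, a2 0 j <= pt y 0 (rshift n1 j) <= a2 0 j + l2].
  by apply/seteqP; split => y /= [h1 h2]; split => j;
    move: (h1 j) || move: (h2 j); rewrite !mxE.
by apply: measurableI; exact: measurable_coord_box.
Qed.

Lemma rects_sub_cube (A : set T) : rects A ->
  exists a l, 0 < l /\ A `<=` (fun x => cube a l (pt x)).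
Proof.
move=> [a1 [l1 [a2 [l2 [l10 [l20 ->]]]]]].
exists (row_mx a1 a2), (l1 + l2); split; first by rewrite addr_gt0.
move=> y [y1 y2] i; case: (splitP i) => j ij.
  have -> : i = lshift n2 j by exact: val_inj.
  by rewrite row_mxEl; have := y1 j; rewrite mxE => /andP[? ?]; apply/andP; split; lra.
have -> : i = rshift n1 j by exact: val_inj.
by rewrite row_mxEr; have := y2 j; rewrite mxE => /andP[? ?]; apply/andP; split; lra.
Qed.

End Rectangles.

Lemma closure_range_coord_approx (R : realType) p d (M : 'M[R]_(p, d))
    (u : nat -> 'cV[R]_d) v i e :
  closure (range u) v -> 0 < e -> exists m, (M *m v) i 0 - e <= (M *m u m) i 0.
Proof.
move=> uv e0.
have K1 : 0 < \sum_j `|M i j| + 1 by rewrite ltr_wpDl // sumr_ge0.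
have e'0 : 0 < e / (\sum_j `|M i j| + 1) by rewrite divr_gt0.
have [_ [[m _ <-] vum]] := uv _ (nbhsx_ballx v _ e'0).
exists m; move: vum; rewrite -ball_normE /ball_ /= => vum.
suff : (M *m (v - u m)) i 0 <= e by rewrite mulmxBr !mxE; lra.
apply: (le_trans (ler_norm _)).
apply: (le_trans (coord_mulmx_le _ _ (fun j => normr_coord_le_mx_norm _ j))).
apply: (@le_trans _ _ ((\sum_j `|M i j| + 1) * (e / (\sum_j `|M i j| + 1)))).
  by rewrite ler_pM ?sumr_ge0 ?normr_ge0 ?lerDl // ltW.
by rewrite mulrC divfK ?gt_eqF.
Qed.

Section IntegralFacts.
Context dT (T : measurableType dT) (R : realType) (mu : {measure set T -> \bar R}).
Variable A : set T.
Hypothesis mA : measurable A.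

Lemma integrable_le_scale (k h : T -> R) (K : R) :
  mu.-integrable A (EFin \o k) -> measurable_fun setT h ->
  (forall y, `|h y| <= K * k y) -> mu.-integrable A (EFin \o h).
Proof.
move=> ik mh hk; apply: (le_integrable mA _ _ (integrableZl mA K ik)).
  exact/measurable_EFinP/measurable_funTS.
by move=> y _ /=; rewrite lee_fin (le_trans (hk y)) // ler_norm.
Qed.

Lemma EFin_Rintegral (h : T -> R) : mu.-integrable A (EFin \o h) ->
  ((\int[mu]_(y in A) h y)%:E = \int[mu]_(y in A) (h y)%:E)%E.
Proof. by move=> ih; rewrite /Rintegral fineK // integrable_fin_num. Qed.

Lemma Rintegral_sum (I : Type) (s : seq I) (h : I -> T -> R) :
  (forall i, mu.-integrable A (EFin \o h i)) ->
  \int[mu]_(y in A) (\sum_(i <- s) h i y) = \sum_(i <- s) \int[mu]_(y in A) h i y.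
Proof.
move=> ih; elim: s => [|i s IH].
  by under eq_Rintegral do rewrite big_nil; rewrite Rintegral_cst // mul0r big_nil.
under eq_Rintegral do rewrite big_cons; rewrite big_cons -IH RintegralD //.
have := @integrable_sum _ _ _ mu A mA _ s xpredT (fun i y => (h i y)%:E) (fun i _ => ih i).
by apply: eq_integrable => // y _; rewrite /= sumEFin.
Qed.

(* No measurability is required, since only the nonnegative simple functions below [f] matter. *)
Lemma ge0_le_integral_nonmeas (f g : T -> \bar R) : (forall y, A y -> (0 <= f y)%E) ->
  (forall y, A y -> (f y <= g y)%E) ->
  (\int[mu]_(y in A) f y <= \int[mu]_(y in A) g y)%E.
Proof.
move=> f0 fg; rewrite (ge0_integralE _ f0).
rewrite (ge0_integralE _ (fun y Ay => le_trans (f0 y Ay) (fg y Ay))).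
apply: ereal_sup_le => _ [h hf <-]; exists h => // y.
by apply: (le_trans (hf y)); rewrite /patch; case: ifP => // /set_mem /fg.
Qed.

End IntegralFacts.

Lemma mulmx_avg (R : realType) n d p (mu : {measure set (LebT R n) -> \bar R})
    (A : set (LebT R n)) (M : 'M[R]_(p, d)) (g : LebT R n -> 'cV[R]_d) :
  measurable A -> (forall j, mu.-integrable A (EFin \o (fun y => g y j 0))) ->
  M *m avg mu A g = avg mu A (fun y => M *m g y).
Proof.
move=> mA ig; apply/matrixP => i j; rewrite (ord1 j) -scalemxAr !mxE; congr (_ * _).
under [RHS]eq_Rintegral do rewrite mxE.
rewrite Rintegral_sum // => [|l]; last first.
  have := integrableZl mA (M i l) (ig l).
  by apply: eq_integrable => // y _; rewrite /= EFinM.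
by apply: eq_bigr => l _; rewrite mxE RintegralZl.
Qed.

Lemma S0_zero (R : realType) n d (G : LebT R n -> set 'cV[R]_d) :
  (forall y, G y 0) -> S0 G (fun _ => 0).
Proof. by move=> G0; split => // i; exact: measurable_cst. Qed.

Lemma S0_measurable (R : realType) n d (G : LebT R n -> set 'cV[R]_d) g :
  S0 G g -> measurable_mxfun g.
Proof. by move=> [/vmeasP]. Qed.

Section Comparison.
Variables (R : realType) (n d : nat) (mu : {measure set (LebT R n) -> \bar R}).
Local Notation T := (LebT R n).
Variables (W : T -> 'M[R]_d) (F : T -> set 'cV[R]_d) (k : T -> R).
Variables (B : set (set T)) (N : set T) (x : T).
Hypothesis mW : measurable_mxfun W.
Hypothesis mN : measurable N.
Hypothesis muN0 : mu N = 0%E.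
Hypothesis W_posdef : forall y, ~ N y -> posdef (W y).
Hypothesis F0 : forall y, F y 0.
Hypothesis F_sym : forall y v, F y v -> F y (- v).
Hypothesis WF_le_k : forall y, (set_norm 1%:M (winv_set W F y) <= (k y)%:E)%E.
Hypothesis B_measurable : forall A, B A -> measurable A.
Hypothesis B_integrable : forall A, B A -> mu.-integrable A (EFin \o k).
Hypothesis B_x : exists A, B A /\ A x.
Variable u : nat -> T -> 'cV[R]_d.
Hypothesis u_meas : forall m, vmeas (u m).
Hypothesis F_dense : forall y, F y = closure (range (u^~ y)).

Local Notation WF := (winv_set W F).
Local Notation L y := (W x *m invmx (W y)).
Local Notation normMK := (set_norm (W x) (MK mu B WF x)).
Local Notation supMWF := (supMW mu B W F x).

Lemma measurable_L_coord (v : T -> 'cV[R]_d) i : measurable_mxfun v ->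
  measurable_fun setT (fun y => (L y *m v y) i 0).
Proof.
move=> mv; apply: (measurable_mxfunM _ mv i 0).
by apply: measurable_mxfunM; [exact: measurable_mxfun_cst | exact: measurable_mxfun_invmx].
Qed.

Lemma eucl_selection_le g y : S0 WF g -> eucl (g y) <= k y.
Proof.
move=> [_ Sg]; rewrite -lee_fin (le_trans _ (WF_le_k y)) //.
by apply: ereal_sup_ubound; exists (g y); rewrite ?mul1mx.
Qed.

Lemma S0_WF_zero : S0 WF (fun _ => 0).
Proof. by apply: S0_zero => y; exists 0; rewrite ?mulmx0. Qed.

Lemma l1norm_selection_le p (M : 'M[R]_(p, d)) g y : S0 WF g ->
  l1norm (M *m g y) <= mx_abs_sum M * k y.
Proof.
move=> Sg; rewrite (le_trans (l1norm_mulmx_le_eucl _ _)) //.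
by rewrite ler_wpM2l ?mx_abs_sum_ge0 ?eucl_selection_le.
Qed.

Lemma integrable_selection p (M : 'M[R]_(p, d)) g A (h : T -> R) : B A -> S0 WF g ->
  measurable_fun setT h -> (forall y, `|h y| <= l1norm (M *m g y)) ->
  mu.-integrable A (EFin \o h).
Proof.
move=> BA Sg mh hle; apply: (integrable_le_scale (B_measurable BA) (B_integrable BA) mh).
by move=> y; exact: le_trans (hle y) (l1norm_selection_le _ _ Sg).
Qed.

Lemma measurable_selection_coord p (M : 'M[R]_(p, d)) g i : S0 WF g ->
  measurable_fun setT (fun y => (M *m g y) i 0).
Proof.
by move=> /S0_measurable mg; exact: measurable_mxfunM (measurable_mxfun_cst M) mg i 0.
Qed.

Lemma avg_selection_coord p (M : 'M[R]_(p, d)) A g i : B A -> S0 WF g ->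
  (M *m avg mu A g) i 0 = (fine (mu A))^-1 * \int[mu]_(y in A) (M *m g y) i 0.
Proof.
move=> BA Sg; rewrite (mulmx_avg _ (B_measurable BA)) => [|j]; first by rewrite !mxE.
apply: (integrable_selection (M := 1%:M) BA Sg) => [|y].
  by have := measurable_selection_coord 1%:M j Sg; under eq_fun do rewrite mul1mx.
by rewrite mul1mx normr_coord_le_l1norm.
Qed.

Lemma MK_avg A g : B A -> S0 WF g -> MK mu B WF x ((\1_A x) *: avg mu A g).
Proof.
move=> BA Sg; apply: subset_closure.
exists 1%N, (fun _ => 1), (fun _ => (\1_A x) *: avg mu A g).
split=> //; split; first by rewrite big_ord1.
split; first by move=> j; exists A => //; exists g.
by rewrite big_ord1 scale1r.
Qed.

Lemma normMK_ge0 : (0 <= normMK)%E.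
Proof.
have [A [BA _]] := B_x.
apply: (le_trans _ (ereal_sup_ubound _)); last first.
  by exists ((\1_A x) *: avg mu A (fun _ => 0)); first exact: MK_avg S0_WF_zero.
by rewrite lee_fin eucl_ge0.
Qed.

Lemma MW_ge0 f : (0 <= MW mu B W f x)%E.
Proof.
have [A [BA Ax]] := B_x.
apply: (le_trans _ (ereal_sup_ubound _)); last by exists A.
apply: mule_ge0; first by rewrite lee_fin invr_ge0 fine_ge0.
by apply: integral_ge0 => y _; rewrite lee_fin eucl_ge0.
Qed.

Lemma supMWF_ge0 : (0 <= supMWF)%E.
Proof.
apply: (le_trans (MW_ge0 (fun _ => 0))); apply: ereal_sup_ubound.
by exists (fun _ => 0) => //; exact: S0_zero.
Qed.

Lemma S0_W_selection g : S0 WF g -> S0 F (fun y => \1_(~` N) y *: (W y *m g y)).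
Proof.
move=> [/vmeasP mg Sg]; split.
  apply/vmeasP => i j; under eq_fun do rewrite mxE.
  apply: measurable_funM; first exact/measurable_indic/measurableC.
  exact: measurable_mxfunM mW mg i j.
move=> y; rewrite indicE; case: (boolP (y \in ~` N)) => [/set_mem Ny|_]; last first.
  by rewrite scale0r.
have [v Fv <-] := Sg y.
by rewrite scale1r mulmxA mulmxV ?mul1mx //; exact/posdef_unitmx/W_posdef.
Qed.

(* [W y *m g y] is only a selection of [F] off the null set [N] where [W] may be singular. *)
Lemma integral_eucl_W_selection A g : B A -> S0 WF g ->
  (\int[mu]_(y in A) (eucl (W x *m g y))%:E =
   \int[mu]_(y in A) (eucl (L y *m (\1_(~` N) y *: (W y *m g y))))%:E)%E.
Proof.
move=> BA Sg; have [mf _] := S0_W_selection Sg.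
apply: ae_eq_integral; first exact: B_measurable.
- apply/measurable_EFinP/measurable_funTS; apply: measurable_fun_eucl.
  exact: measurable_mxfunM (measurable_mxfun_cst _) (S0_measurable Sg).
- apply/measurable_EFinP/measurable_funTS; apply: measurable_fun_eucl.
  apply: measurable_mxfunM (measurable_mxfunM _ _) (proj1 (vmeasP _) mf).
    exact: measurable_mxfun_cst.
  exact: measurable_mxfun_invmx.
exists N; split => // y /= AyP; apply: contrapT => Ny; apply: AyP => _.
rewrite indicE mem_set //= scale1r -!mulmxA (mulmxA (invmx (W y))).
by rewrite mulVmx ?mul1mx //; exact/posdef_unitmx/W_posdef.
Qed.

Lemma integrable_selection_coord p (M : 'M[R]_(p, d)) A g i : B A -> S0 WF g ->
  mu.-integrable A (EFin \o (fun y => (M *m g y) i 0)).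
Proof.
move=> BA Sg; apply: (integrable_selection BA Sg (measurable_selection_coord M i Sg)).
by move=> y; exact: normr_coord_le_l1norm.
Qed.

Lemma integrable_eucl_selection p (M : 'M[R]_(p, d)) A g : B A -> S0 WF g ->
  mu.-integrable A (EFin \o (fun y => eucl (M *m g y))).
Proof.
move=> BA Sg; apply: (integrable_selection (M := M) BA Sg) => [|y].
  apply: measurable_fun_eucl.
  exact: measurable_mxfunM (measurable_mxfun_cst _) (S0_measurable Sg).
by rewrite ger0_norm ?eucl_ge0 ?eucl_le_l1norm.
Qed.

Lemma l1norm_avg_le A g : B A -> S0 WF g ->
  l1norm (W x *m avg mu A g) <=
  d%:R * ((fine (mu A))^-1 * \int[mu]_(y in A) eucl (W x *m g y)).
Proof.
move=> BA Sg; have mA := B_measurable BA.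
have cA0 : 0 <= (fine (mu A))^-1 by rewrite invr_ge0 fine_ge0.
rewrite mulr_natl -[d in _ *+ d]card_ord -sumr_const /l1norm; apply: ler_sum => i _.
rewrite avg_selection_coord // normrM ger0_norm // ler_wpM2l //.
apply: (le_trans (le_normr_Rintegral mA (integrable_selection_coord _ _ BA Sg))).
apply: le_Rintegral; rewrite ?integrable_eucl_selection //.
  apply: (integrable_selection (M := W x) BA Sg) => [|y].
    exact: measurableT_comp (measurable_selection_coord (W x) i Sg).
  by rewrite normr_id normr_coord_le_l1norm.
by move=> y _; exact: normr_coord_le_eucl.
Qed.

Lemma l1norm_generator_le_supMW b :
  [set (\1_A x) *: avg mu A g | A in B & g in S0 WF] b ->
  ((l1norm (W x *m b))%:E <= d%:R%:E * supMWF)%E.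
Proof.
move=> [A BA [g Sg <-]]; rewrite indicE.
case: (boolP (x \in A)) => [/set_mem Ax|_]; last first.
  rewrite scale0r mulmx0 /l1norm big1 ?mule_ge0 ?supMWF_ge0 ?lee_fin //.
  by move=> i _; rewrite mxE normr0.
have Sf := S0_W_selection Sg.
set f := fun y => \1_(~` N) y *: (W y *m g y) in Sf.
apply: (@le_trans _ _ (d%:R%:E * MW mu B W f x)%E); last first.
  by rewrite lee_wpmul2l ?lee_fin //; apply: ereal_sup_ubound; exists f.
apply: (@le_trans _ _
    (d%:R%:E * (((fine (mu A))^-1)%:E * \int[mu]_(y in A) (eucl (L y *m f y))%:E))%E).
  rewrite -integral_eucl_W_selection //.
  rewrite -(EFin_Rintegral (B_measurable BA) (integrable_eucl_selection (W x) BA Sg)).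
  by rewrite -!EFinM lee_fin scale1r l1norm_avg_le.
by rewrite lee_wpmul2l ?lee_fin //; apply: ereal_sup_ubound; exists A.
Qed.

Lemma normMK_le_supMW : (normMK <= d%:R%:E * supMWF)%E.
Proof.
apply: ge_ereal_sup => _ [b MKb <-].
have : (0 <= d%:R%:E * supMWF)%E by rewrite mule_ge0 ?supMWF_ge0 ?lee_fin.
case: (d%:R%:E * supMWF)%E (@l1norm_generator_le_supMW) => [r| |] gen_le // _;
  last exact: leey.
rewrite lee_fin (le_trans (eucl_le_l1norm _)) //.
apply: (l1norm_mulmx_closure_le _ MKb) => b' /l1norm_mulmx_convhull_le; apply.
by move=> b'' /gen_le; rewrite lee_fin.
Qed.

Lemma integral_coord_le_normMK A s i : B A -> A x -> S0 F s ->
  (((fine (mu A))^-1)%:E * \int[mu]_(y in A) ((L y *m s y) i 0)%:E <= normMK)%E.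
Proof.
move=> BA Ax Ss; pose g y := invmx (W y) *m s y.
have Sg : S0 WF g.
  split; last by move=> y; exists (s y) => //; exact: Ss.2.
  apply/vmeasP/measurable_mxfunM; last exact: S0_measurable Ss.
  exact: measurable_mxfun_invmx.
have -> : (\int[mu]_(y in A) ((L y *m s y) i 0)%:E =
           \int[mu]_(y in A) ((W x *m g y) i 0)%:E)%E.
  by apply: eq_integral => y _; rewrite mulmxA.
rewrite -(EFin_Rintegral (B_measurable BA) (integrable_selection_coord (W x) i BA Sg)).
rewrite -EFinM -avg_selection_coord //.
apply: (le_trans _ (ereal_sup_ubound _)); last first.
  by exists ((\1_A x) *: avg mu A g); first exact: MK_avg.
by rewrite indicE mem_set // scale1r lee_fin (le_trans (ler_norm _)) ?normr_coord_le_eucl.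
Qed.

Definition coord_monotone_approx (h : T -> 'cV[R]_d) i (s : nat -> T -> 'cV[R]_d) :=
  [/\ forall m, S0 F (s m),
      forall m y, 0 <= (L y *m s m y) i 0,
      forall y, nondecreasing_seq (fun m => (L y *m s m y) i 0) &
      forall y, (fun m => ((L y *m s m y) i 0)%:E) @ \oo --> (`|(L y *m h y) i 0|)%:E].

Section CoordMonotoneApprox.
Variables (h : T -> 'cV[R]_d) (i : 'I_d) (s : nat -> T -> 'cV[R]_d) (A : set T).
Hypotheses (hs : coord_monotone_approx h i s) (BA : B A) (Ax : A x).
Let G m y := ((L y *m s m y) i 0)%:E.

Let measurable_G m : measurable_fun A (G m).
Proof.
have [Ss _ _ _] := hs; apply/measurable_EFinP/measurable_funTS.
exact: measurable_L_coord (S0_measurable (Ss m)).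
Qed.

Lemma measurable_abs_coord : measurable_fun A (fun y => (`|(L y *m h y) i 0|)%:E).
Proof.
have [_ _ _ cvg_s] := hs.
exact: (emeasurable_fun_cvg G _ measurable_G (fun y _ => cvg_s y)).
Qed.

Lemma integral_abs_coord_le_normMK :
  (((fine (mu A))^-1)%:E * \int[mu]_(y in A) (`|(L y *m h y) i 0|)%:E <= normMK)%E.
Proof.
have [Ss s0 nd_s cvg_s] := hs; have mA := B_measurable BA.
have G0 m y : (0 <= G m y)%E by rewrite lee_fin.
have nd_G y : {homo G^~ y : a b / (a <= b)%N >-> (a <= b)%E}.
  by move=> a b ab; rewrite lee_fin; exact: nd_s.
have cA0 : (0 <= ((fine (mu A))^-1)%:E)%E by rewrite lee_fin invr_ge0 fine_ge0.
have -> : (\int[mu]_(y in A) (`|(L y *m h y) i 0|)%:E =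
           \int[mu]_(y in A) limn (G^~ y))%E.
  by apply: eq_integral => y _; rewrite (cvg_lim _ (cvg_s y)).
rewrite (monotone_convergence mu mA measurable_G (fun m y _ => G0 m y) (fun y _ => nd_G y)).
have nd_int : nondecreasing_seq (fun m => \int[mu]_(y in A) G m y)%E.
  by apply/nondecreasing_seqP => m; apply: ge0_le_integral => // y _; exact: nd_G.
rewrite -limeMl //; last exact: ereal_nondecreasing_is_cvgn.
apply: lime_le; last by apply: nearW => m; exact: integral_coord_le_normMK.
by apply: ereal_nondecreasing_is_cvgn => a b ab; rewrite lee_wpmul2l // nd_int.
Qed.

End CoordMonotoneApprox.

Lemma MW_le_normMK h : (forall i, exists s, coord_monotone_approx h i s) ->
  (MW mu B W h x <= d%:R%:E * normMK)%E.
Proof.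
move=> approx; apply: ge_ereal_sup => _ [A [BA Ax] <-].
have mA := B_measurable BA.
have cA0 : (0 <= ((fine (mu A))^-1)%:E)%E by rewrite lee_fin invr_ge0 fine_ge0.
have mabs i : measurable_fun A (fun y => (`|(L y *m h y) i 0|)%:E).
  by have [s hs] := approx i; exact: measurable_abs_coord hs.
apply: (@le_trans _ _ (\sum_(i < d) ((fine (mu A))^-1)%:E *
    \int[mu]_(y in A) (`|(L y *m h y) i 0|)%:E)%E).
  rewrite -ge0_sume_distrr => [|i _]; last by apply: integral_ge0 => y _; rewrite lee_fin.
  rewrite lee_wpmul2l // -(ge0_integral_sum mu mA mabs) => [|i y _]; last by rewrite lee_fin.
  apply: ge0_le_integral_nonmeas => y _; first by rewrite lee_fin eucl_ge0.
  by rewrite sumEFin lee_fin eucl_le_l1norm.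
apply: (@le_trans _ _ (\sum_(i < d) normMK)%E); last by rewrite sumr_const card_ord mule_natl.
apply: lee_sum => i _; have [s hs] := approx i.
exact: integral_abs_coord_le_normMK hs BA Ax.
Qed.

Definition coord_sign (f : T -> 'cV[R]_d) i y : R :=
  if 0 <= (L y *m f y) i 0 then 1 else -1.

Lemma coord_monotone_approx_sign f i : S0 F f ->
  coord_monotone_approx f i (fun _ y => coord_sign f i y *: f y).
Proof.
move=> Sf; have sgE y : (L y *m (coord_sign f i y *: f y)) i 0 = `|(L y *m f y) i 0|.
  rewrite -scalemxAr mxE /coord_sign; case: ifPn => [/ger0_norm ->|]; first by rewrite mul1r.
  by rewrite -ltNge => /ltr0_norm ->; rewrite mulN1r.
split=> [m|m y|y|y]; rewrite ?sgE //; last exact: cvg_cst.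
split.
  apply/vmeasP => a b; under eq_fun do rewrite mxE.
  apply: measurable_funM; last exact: S0_measurable Sf a b.
  apply: measurable_fun_ifT; try exact: measurable_cst.
  apply: measurable_fun_ler; first exact: measurable_cst.
  exact: measurable_L_coord (S0_measurable Sf).
move=> y; rewrite /coord_sign; case: ifP => _; first by rewrite scale1r; exact: Sf.2.
by rewrite scaleN1r; apply: F_sym; exact: Sf.2.
Qed.

Lemma supMW_le_normMK : (supMWF <= d%:R%:E * normMK)%E.
Proof.
apply: ge_ereal_sup => _ [f Sf <-]; apply: MW_le_normMK => i.
by eexists; exact: coord_monotone_approx_sign.
Qed.

Section ConvexHullOfPair.
Variable f : T -> 'cV[R]_d.
Hypothesis F_pair : forall y, F y = convhull [set - f y; f y].

Lemma supMW_le_MW_pair : (supMWF <= MW mu B W f x)%E.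
Proof.
apply: ge_ereal_sup => _ [g Sg <-]; apply: ge_ereal_sup => _ [A [BA Ax] <-].
apply: (le_trans _ (ereal_sup_ubound _)); last by exists A.
rewrite lee_wpmul2l ?lee_fin ?invr_ge0 ?fine_ge0 //.
apply: ge0_le_integral_nonmeas => y _; first by rewrite lee_fin eucl_ge0.
have := Sg.2 y; rewrite F_pair => /convhull_opp_pair [t [t1 ->]].
by rewrite -scalemxAr euclZ lee_fin ler_piMl ?eucl_ge0.
Qed.

Fixpoint coord_max_selection i m : T -> 'cV[R]_d :=
  if m is m'.+1 then fun y =>
    if (L y *m coord_max_selection i m' y) i 0 < (L y *m u m' y) i 0 then u m' y
    else coord_max_selection i m' y
  else fun _ => 0.

Lemma S0_coord_max_selection i m : S0 F (coord_max_selection i m).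
Proof.
elim: m => [|m [/vmeasP mS SS]]; first exact: S0_zero.
split=> [|y /=]; last first.
  by case: ifP => _ //; rewrite F_dense; apply: subset_closure; exists m.
apply/vmeasP => a b /=; under eq_fun do rewrite (fun_if (fun v : 'cV[R]_d => v a b)).
have /vmeasP mum := u_meas m.
by apply: measurable_fun_ifT => //; apply: measurable_fun_ltr; exact: measurable_L_coord.
Qed.

Lemma coord_max_selection_ge0 i m y : 0 <= (L y *m coord_max_selection i m y) i 0.
Proof.
elim: m => [|m IH] /=; first by rewrite mulmx0 mxE.
by case: ifP => // /(le_lt_trans IH)/ltW.
Qed.

Lemma coord_max_selection_nondecreasing i y :
  nondecreasing_seq (fun m => (L y *m coord_max_selection i m y) i 0).
Proof. by apply/nondecreasing_seqP => m /=; case: ifP => // /ltW. Qed.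

Lemma coord_max_selection_ge i m y :
  (L y *m u m y) i 0 <= (L y *m coord_max_selection i m.+1 y) i 0.
Proof. by rewrite /=; case: ifP => //; rewrite ltNge => /negbFE. Qed.

Lemma coord_max_selection_le i m y :
  (L y *m coord_max_selection i m y) i 0 <= `|(L y *m f y) i 0|.
Proof.
have := (S0_coord_max_selection i m).2 y; rewrite F_pair => /convhull_opp_pair [t [t1 ->]].
by rewrite -scalemxAr mxE (le_trans (ler_norm _)) // normrM ler_piMl.
Qed.

Lemma coord_monotone_approx_max i :
  coord_monotone_approx f i (coord_max_selection i).
Proof.
split=> [m|m y|y|y]; [exact: S0_coord_max_selection | exact: coord_max_selection_ge0 |
  exact: coord_max_selection_nondecreasing |].
have nd : nondecreasing_seq (fun m => ((L y *m coord_max_selection i m y) i 0)%:E).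
  by move=> a b ab; rewrite lee_fin; exact: coord_max_selection_nondecreasing.
suff -> : (`|(L y *m f y) i 0|)%:E =
    ereal_sup (range (fun m => ((L y *m coord_max_selection i m y) i 0)%:E)).
  exact: ereal_nondecreasing_cvgn.
apply/eqP; rewrite eq_le; apply/andP; split; last first.
  by apply: ge_ereal_sup => _ [m _ <-]; rewrite lee_fin coord_max_selection_le.
apply/lee_addgt0Pr => e e0.
have Ff : F y (f y).
  rewrite F_pair; exists 1%N, (fun _ => 1), (fun _ => f y).
  by split=> //; split; rewrite ?big_ord1 ?scale1r //; split=> // j; right.
have [m approx] : exists m, `|(L y *m f y) i 0| - e <= (L y *m u m y) i 0.
  have [Lf0|Lf0] := lerP 0 ((L y *m f y) i 0).
    by rewrite ger0_norm //; apply: closure_range_coord_approx; rewrite -?F_dense.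
  have Fneg : closure (range (u^~ y)) (- f y) by rewrite -F_dense; exact: F_sym.
  have [m] := closure_range_coord_approx (L y) i Fneg e0.
  by rewrite ltr0_norm // mulmxN mxE => ?; exists m.
apply: (@le_trans _ _ (((L y *m coord_max_selection i m.+1 y) i 0)%:E + e%:E)%E).
  by rewrite -EFinD lee_fin; have := coord_max_selection_ge i m y; lra.
by rewrite leeD2r //; apply: ereal_sup_ubound; exists m.+1.
Qed.

Lemma MW_pair_le_normMK : (MW mu B W f x <= d%:R%:E * normMK)%E.
Proof. by apply: MW_le_normMK => i; exists (coord_max_selection i); exact: coord_monotone_approx_max. Qed.

End ConvexHullOfPair.

Lemma comparison :
  (normMK <= (d%:R + 1)%:E * supMWF)%E /\ (supMWF <= (d%:R + 1)%:E * normMK)%E /\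
  (forall f, (forall y, F y = convhull [set - f y; f y]) ->
     (normMK <= (d%:R + 1)%:E * MW mu B W f x)%E /\
     (MW mu B W f x <= (d%:R + 1)%:E * normMK)%E).
Proof.
have le_succ (a : \bar R) : (0 <= a)%E -> (d%:R%:E * a <= (d%:R + 1)%:E * a)%E.
  by move=> a0; rewrite !(muleC _ a) lee_wpmul2l // lee_fin lerDl.
split; first exact: le_trans normMK_le_supMW (le_succ _ supMWF_ge0).
split; first exact: le_trans supMW_le_normMK (le_succ _ normMK_ge0).
move=> f F_pair; split; last exact: le_trans (MW_pair_le_normMK F_pair) (le_succ _ normMK_ge0).
apply: (le_trans normMK_le_supMW); apply: le_trans (le_succ _ (MW_ge0 _)).
by rewrite lee_wpmul2l ?lee_fin // supMW_le_MW_pair.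
Qed.

End Comparison.

Lemma Kbcs_closure_range_zero (R : realType) n d (F : LebT R n -> set 'cV[R]_d)
    (u : nat -> LebT R n -> 'cV[R]_d) y :
  Kbcs (F y) -> F y = closure (range (u^~ y)) -> F y 0.
Proof.
move=> KF Fu; apply: Kbcs_zero KF _.
by exists (u 0%N y); rewrite Fu; apply: subset_closure; exists 0%N.
Qed.

Lemma MK_MW_comparison (R : realType) n d (mu : {measure set (LebT R n) -> \bar R})
    (B : set (set (LebT R n))) (W : LebT R n -> 'M[R]_d) (F : LebT R n -> set 'cV[R]_d) :
  (forall A, B A -> measurable A) ->
  (forall k, L1loc mu k -> forall A, B A -> mu.-integrable A (EFin \o k)) ->
  matrix_weight mu W -> setfun_meas F -> (forall y, Kbcs (F y)) ->
  loc_int_bounded mu (winv_set W F) ->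
  forall x, (exists A, B A /\ A x) ->
    (set_norm (W x) (MK mu B (winv_set W F) x) <= (d%:R + 1)%:E * supMW mu B W F x)%E /\
    (supMW mu B W F x <= (d%:R + 1)%:E * set_norm (W x) (MK mu B (winv_set W F) x))%E /\
    (forall f, (forall y, F y = convhull [set - f y; f y]) ->
       (set_norm (W x) (MK mu B (winv_set W F) x) <= (d%:R + 1)%:E * MW mu B W f x)%E /\
       (MW mu B W f x <= (d%:R + 1)%:E * set_norm (W x) (MK mu B (winv_set W F) x))%E).
Proof.
move=> mB iB [mW [N [mN [muN0 W_posdef]]]] [u [u_meas F_dense]] KF [k [Lk WF_le_k]] x Bx.
have F0 y := Kbcs_closure_range_zero (KF y) (F_dense y).
have F_sym y v : F y v -> F y (- v) by have [_ [_]] := KF y; apply.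
exact: (comparison mW mN muN0 W_posdef F0 F_sym WF_le_k mB (iB _ Lk) Bx u_meas F_dense).
Qed.

Lemma L1loc_integrable_cubes (R : realType) n (mu : {measure set (LebT R n) -> \bar R})
    (k : LebT R n -> R) : L1loc mu k -> forall A, cubes A -> mu.-integrable A (EFin \o k).
Proof. by move=> [_ ik] A [a [l [l0 ->]]]; exact: ik. Qed.

Lemma L1loc_integrable_rects (R : realType) n1 n2
    (mu : {measure set (LebT R (n1 + n2)) -> \bar R}) (k : LebT R (n1 + n2) -> R) :
  L1loc mu k -> forall A, rects A -> mu.-integrable A (EFin \o k).
Proof.
move=> [_ ik] A rA; have [a [l [l0 Acube]]] := rects_sub_cube rA.
apply: (integrableS _ (rects_measurable rA) Acube (ik a l l0)).
by apply: cubes_measurable; exists a, l.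
Qed.

Lemma cubes_cover (R : realType) n (x : LebT R n) : exists A, cubes A /\ A x.
Proof.
exists (fun y : LebT R n => cube (pt x) 1 (pt y)); split; first by exists (pt x), 1.
by move=> i; rewrite lexx lerDl ler01.
Qed.

Lemma rects_cover (R : realType) n1 n2 (x : LebT R (n1 + n2)) : exists A, rects A /\ A x.
Proof.
exists (fun y : LebT R (n1 + n2) =>
  cube (lsubmx (pt x)) 1 (lsubmx (pt y)) /\ cube (rsubmx (pt x)) 1 (rsubmx (pt y))).
split; first by exists (lsubmx (pt x)), 1, (rsubmx (pt x)), 1.
by split=> i; rewrite lexx lerDl ler01.
Qed.

Theorem lemma3p4 (R : realType) (d : nat) :
  exists C : R, 0 < C /\
  (* bi-parameter (strong) operators M_K^s and M_W^s on R^n = R^n1 x R^n2 *)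
  (forall (n1 n2 : nat) (mu : {measure set (LebT R (n1 + n2)) -> \bar R})
     (W : LebT R (n1 + n2) -> 'M[R]_d) (F : LebT R (n1 + n2) -> set 'cV[R]_d),
     (0 < n1)%N -> (0 < n2)%N ->
     is_lebesgue mu -> matrix_weight mu W ->
     setfun_meas F -> (forall x, Kbcs (F x)) ->
     loc_int_bounded mu (winv_set W F) ->
     forall x : LebT R (n1 + n2),
       (set_norm (W x) (MK mu (@rects R n1 n2) (winv_set W F) x)
          <= C%:E * supMW mu (@rects R n1 n2) W F x)%E /\
       (supMW mu (@rects R n1 n2) W F x
          <= C%:E * set_norm (W x) (MK mu (@rects R n1 n2) (winv_set W F) x))%E /\
       (forall f : LebT R (n1 + n2) -> 'cV[R]_d,
          (forall y, F y = convhull [set - f y; f y]) ->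
          (set_norm (W x) (MK mu (@rects R n1 n2) (winv_set W F) x)
             <= C%:E * MW mu (@rects R n1 n2) W f x)%E /\
          (MW mu (@rects R n1 n2) W f x
             <= C%:E * set_norm (W x) (MK mu (@rects R n1 n2) (winv_set W F) x))%E)) /\
  (* one-parameter operators M_K and M_W on R^n *)
  (forall (n : nat) (mu : {measure set (LebT R n) -> \bar R})
     (W : LebT R n -> 'M[R]_d) (F : LebT R n -> set 'cV[R]_d),
     (0 < n)%N ->
     is_lebesgue mu -> matrix_weight mu W ->
     setfun_meas F -> (forall x, Kbcs (F x)) ->
     loc_int_bounded mu (winv_set W F) ->
     forall x : LebT R n,
       (set_norm (W x) (MK mu (@cubes R n) (winv_set W F) x)
          <= C%:E * supMW mu (@cubes R n) W F x)%E /\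
       (supMW mu (@cubes R n) W F x
          <= C%:E * set_norm (W x) (MK mu (@cubes R n) (winv_set W F) x))%E /\
       (forall f : LebT R n -> 'cV[R]_d,
          (forall y, F y = convhull [set - f y; f y]) ->
          (set_norm (W x) (MK mu (@cubes R n) (winv_set W F) x)
             <= C%:E * MW mu (@cubes R n) W f x)%E /\
          (MW mu (@cubes R n) W f x
             <= C%:E * set_norm (W x) (MK mu (@cubes R n) (winv_set W F) x))%E)).
Proof.
exists (d%:R + 1); split; first by rewrite ltr_wpDl.
split=> [n1 n2 mu W F _ _ _ mW mF KF WFk x | n mu W F _ _ mW mF KF WFk x].
  apply: MK_MW_comparison mW mF KF WFk x (rects_cover x) => //.
    exact: rects_measurable.
  exact: L1loc_integrable_rects.
apply: MK_MW_comparison mW mF KF WFk x (cubes_cover x) => //.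
  exact: cubes_measurable.
exact: L1loc_integrable_cubes.
Qed.
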